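(* Let $F=F(N,\mathcal D)$ be a connected GSC and let $x$ be a cut point of $F$. Then there exist $n_0\ge1$ and two distinct words $\omega,\tau\in\mathcal D^{n_0}\setminus\Omega_{n_0}(x)$ that are well separated by $x$.
   Context: GSC: $N\ge2$, $\mathcal D\subset\{0,\dots,N-1\}^2$ with $1<|\mathcal D|<N^2$, $\varphi_i(x)=\frac1N(x+i)$, $F$ the attractor $F=\bigcup_{i\in\mathcal D}\varphi_i(F)$; $\varphi_{i_1\cdots i_k}=\varphi_{i_1}\circ\cdots\circ\varphi_{i_k}$. For $x\in F$, $k\ge1$: $\Omega_k(x)=\{\mathbf i\in\mathcal D^k: x\in\varphi_{\mathbf i}(F)\}$ and $E_k(x)=\bigcup_{\mathbf j\in\mathcal D^k\setminus\Omega_k(x)}\varphi_{\mathbf j}(F)$. Words $\omega,\tau\in\mathcal D^n\setminus\Omega_n(x)$ are well separated by $x$ if for every $p\ge1$, $\varphi_\omega(F)$ and $\varphi_\tau(F)$ lie in different connected components of $E_{n+p}(x)$. *)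

From HB Require Import structures.
From mathcomp Require Import all_boot all_order all_algebra.
From mathcomp Require Import all_classical all_reals all_analysis.
Set Implicit Arguments. Unset Strict Implicit. Unset Printing Implicit Defensive.
Import Order.TTheory GRing.Theory Num.Theory.
Import numFieldNormedType.Exports.
Local Open Scope classical_set_scope.
Local Open Scope ring_scope.

Section GSC.
Variables (R : realType) (N : nat).

Definition digit := ('I_N * 'I_N)%type.

Definition phi (i : digit) (z : R * R) : R * R :=
  ((z.1 + (nat_of_ord i.1)%:R) / N%:R, (z.2 + (nat_of_ord i.2)%:R) / N%:R).

Definition phiw (w : seq digit) (z : R * R) : R * R :=
  foldr (fun i acc => phi i acc) z w.

Variable D : {set digit}.

Definition word (k : nat) (w : seq digit) : Prop :=
  size w = k /\ all (fun i => i \in D) w.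

Definition is_attractor (F : set (R * R)) : Prop :=
  [/\ compact F, F !=set0 &
      F = \bigcup_(i in [set i : digit | i \in D]) (phi i @` F)].

Variable F : set (R * R).

Definition Omega (k : nat) (x : R * R) : set (seq digit) :=
  [set w | word k w /\ (phiw w @` F) x].

Definition Eset (k : nat) (x : R * R) : set (R * R) :=
  \bigcup_(j in [set j | word k j /\ ~ Omega k x j]) (phiw j @` F).

Definition cut_point (x : R * R) : Prop :=
  F x /\ ~ connected (F `\ x).

Definition well_separated (n : nat) (x : R * R) (om ta : seq digit) : Prop :=
  [/\ word n om, ~ Omega n x om, word n ta, ~ Omega n x ta &
   forall p : nat, (1 <= p)%N ->
     (phiw om @` F) `<=` Eset (n + p) x /\
     (phiw ta @` F) `<=` Eset (n + p) x /\
     forall a b, (phiw om @` F) a -> (phiw ta @` F) b ->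
       ~ connected_component (Eset (n + p) x) a b].

End GSC.

From HB Require Import structures.
From mathcomp Require Import all_boot all_order all_algebra.
From mathcomp Require Import all_classical all_reals all_analysis.
From mathcomp Require Import ring.
Set Implicit Arguments. Unset Strict Implicit. Unset Printing Implicit Defensive.
Import Order.TTheory GRing.Theory Num.Theory.
Import numFieldNormedType.Exports.
Local Open Scope classical_set_scope.
Local Open Scope ring_scope.

(** Let [F \ {x} = A ∪ B] be a separation. Pick [a ∈ A] and [b ∈ B]. The
    level-[n] cells [φ_w(F)] have diameter at most [diam F / N^n], so for [n]
    large the cells [φ_ω(F) ∋ a] and [φ_τ(F) ∋ b] miss [x]; being connected
    and contained in [F \ {x}], they lie in [A] and in [B] respectively. Every
    subcell of a cell missing [x] misses [x], so both cells are contained in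
    [E_{n+p}(x) ⊆ F \ {x}], and no connected subset of [E_{n+p}(x)] meets
    both [A] and [B]. *)

Lemma connected_subset_side (T : topologicalType) (A B C : set T) (c : T) :
  separated A B -> C `<=` A `|` B -> connected C -> C c -> A c -> C `<=` A.
Proof.
move=> sepAB CAB cC Cc Ac; case: (connected_subset sepAB CAB cC) => // CB.
suff : (A `&` B) c by rewrite (separated_disjoint sepAB).
by split; [|exact: CB].
Qed.

Lemma separated_not_connected_component (T : topologicalType) (A B S : set T)
    (a b : T) :
  separated A B -> S `<=` A `|` B -> A a -> B b -> ~ connected_component S a b.
Proof.
move=> sepAB SAB Aa Bb [C [Ca CS cC] Cb].
have CA := connected_subset_side sepAB (subset_trans CS SAB) cC Ca Aa.
suff : (A `&` B) b by rewrite (separated_disjoint sepAB).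
by split; [exact: CA|].
Qed.

Section Cells.
Variables (R : realType) (N : nat).

Lemma phi_continuous (i : digit N) : continuous (@phi R N i).
Proof.
move=> z; rewrite /phi.
have h1 : (fun u : R * R => (u.1 + i.1%:R) / N%:R) @ z --> (z.1 + i.1%:R) / N%:R.
  by apply: cvgM; [apply: cvgD; [exact: cvg_fst | exact: cvg_cst] | exact: cvg_cst].
have h2 : (fun u : R * R => (u.2 + i.2%:R) / N%:R) @ z --> (z.2 + i.2%:R) / N%:R.
  by apply: cvgM; [apply: cvgD; [exact: cvg_snd | exact: cvg_cst] | exact: cvg_cst].
exact: (cvg_pair h1 h2).
Qed.

Lemma phiw_continuous (w : seq (digit N)) : continuous (@phiw R N w).
Proof.
elim: w => [|i w IH] /= z; first exact: cvg_id.
exact: (continuous_comp (IH z) (@phi_continuous i _)).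
Qed.

Lemma phiw_cat (u v : seq (digit N)) (z : R * R) :
  phiw (u ++ v) z = phiw u (phiw v z).
Proof. by rewrite /phiw foldr_cat. Qed.

Lemma phiB (i : digit N) (z z' : R * R) :
  phi i z - phi i z' = N%:R^-1 *: (z - z').
Proof.
by rewrite /phi; congr pair => /=; rewrite -mulrBl opprD addrACA subrr addr0 mulrC.
Qed.

Lemma phiwB (w : seq (digit N)) (z z' : R * R) :
  phiw w z - phiw w z' = N%:R^-1 ^+ size w *: (z - z').
Proof.
elim: w => [|i w IH]; first by rewrite scale1r.
by rewrite /= phiB IH scalerA -exprS.
Qed.

Lemma norm_phiwB (w : seq (digit N)) (z z' : R * R) :
  `|phiw w z - phiw w z'| = `|z - z'| / N%:R ^+ size w.
Proof.
by rewrite phiwB prod_norm_scale normrX normfV normr_nat exprVn mulrC.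
Qed.

End Cells.

Section Attractor.
Variables (R : realType) (N : nat) (D : {set digit N}) (F : set (R * R)).
Hypothesis attrF : is_attractor D F.

Lemma phiw_subset_attractor (w : seq (digit N)) :
  all (fun i => i \in D) w -> phiw w @` F `<=` F.
Proof.
have [_ _ eqF] := attrF.
elim: w => [|i w IH] /= => [_ y [u Fu <-] //|/andP[iD wD] y [u Fu <-]].
rewrite eqF; exists i => //; exists (phiw w u) => //.
by apply: IH => //; exists u.
Qed.

Lemma exists_cell (k : nat) (y : R * R) :
  F y -> exists w, word D k w /\ (phiw w @` F) y.
Proof.
have [_ _ eqF] := attrF.
move=> Fy; elim: k => [|k [w [[sw wD] [u Fu <-]]]].
  by exists [::]; split => //; exists y.
move: Fu; rewrite {1}eqF => -[i /= iD [v Fv <-]].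
exists (w ++ [:: i]); split; first split.
- by rewrite size_cat sw addn1.
- by rewrite all_cat wD /= iD.
by exists v => //; rewrite phiw_cat.
Qed.

Lemma connected_cell (w : seq (digit N)) :
  connected F -> connected (phiw w @` F).
Proof.
move=> cF; apply: connected_continuous_connected => //.
exact/continuous_subspaceT/phiw_continuous.
Qed.

Lemma cell_subset_setD1 (k : nat) (w : seq (digit N)) (x : R * R) :
  word D k w -> ~ (phiw w @` F) x -> phiw w @` F `<=` F `\ x.
Proof.
move=> [_ wD] wx z wz; split; first exact: (phiw_subset_attractor wD).
by move=> zx; apply: wx; rewrite -zx.
Qed.

Lemma Eset_subset_setD1 (k : nat) (x : R * R) : Eset D F k x `<=` F `\ x.
Proof.
move=> z [j [jk jx] jz]; apply: (cell_subset_setD1 jk) jz.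
by move=> xj; apply: jx.
Qed.

Lemma cell_subset_Eset (n p : nat) (w : seq (digit N)) (x : R * R) :
  word D n w -> ~ (phiw w @` F) x -> phiw w @` F `<=` Eset D F (n + p) x.
Proof.
move=> [sw wD] wx z [u Fu <-].
have [v [[sv vD] [t Ft <-]]] := exists_cell p Fu.
exists (w ++ v); last by exists t => //; rewrite phiw_cat.
split; first by split; rewrite ?size_cat ?sw ?sv // all_cat wD vD.
case=> _ [s Fs]; rewrite phiw_cat => xs; apply: wx.
by exists (phiw v s) => //; apply: (phiw_subset_attractor vD); exists s.
Qed.

(* Cells of level [n] have diameter at most [2 M / N^n] when [F] lies in the
   ball of radius [M]. *)
Lemma cells_eventually_avoid (y x : R * R) : (2 <= N)%N -> y <> x ->
  exists n0 : nat, forall (n : nat) (w : seq (digit N)),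
    (n0 <= n)%N -> size w = n -> (phiw w @` F) y -> ~ (phiw w @` F) x.
Proof.
move=> N2 yx; have [cptF _ _] := attrF.
have [M [_ HM]] := compact_bounded cptF.
have FM : forall z, F z -> `|z| <= M + 1 by apply: HM; rewrite ltrDl.
have yx_gt0 : 0 < `|y - x| by rewrite normr_gt0 subr_eq0; apply/eqP.
exists (Num.Def.archi_bound (2 * (M + 1) / `|y - x|)).
move=> n w n0n sw [u Fu yu] [v Fv xv].
have Nn_gt0 : 0 < (N%:R : R) ^+ n by rewrite exprn_gt0 // ltr0n; case: N N2.
have big : 2 * (M + 1) / `|y - x| < N%:R ^+ n.
  apply: (lt_le_trans (upper_nthrootP n0n)).
  by rewrite lerXn2r ?nnegrE ?ler0n // ler_nat.
have uv : `|u - v| <= 2 * (M + 1).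
  rewrite mulr2n mulrDl mul1r; apply: (le_trans (ler_normB _ _)).
  by apply: lerD; apply: FM.
have uv_eq : `|u - v| = N%:R ^+ n * `|y - x|.
  by rewrite -yu -xv norm_phiwB sw mulrC divfK ?lt0r_neq0.
by move: big; rewrite ltr_pdivrMr // -uv_eq ltNge uv.
Qed.

Lemma cell_subset_side (A B : set (R * R)) (k : nat) (w : seq (digit N))
    (x c : R * R) :
  connected F -> separated A B -> F `\ x = A `|` B ->
  word D k w -> ~ (phiw w @` F) x -> (phiw w @` F) c -> A c ->
  phiw w @` F `<=` A.
Proof.
move=> cF sepAB FxAB w_word w_x.
apply: connected_subset_side sepAB _ (connected_cell cF).
by rewrite -FxAB; apply: cell_subset_setD1 w_word w_x.
Qed.

End Attractor.

Theorem mainTheorem17 (R : realType) (N : nat) (D : {set digit N})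
  (F : set (R * R)) :
  (2 <= N)%N -> (1 < #|D|)%N -> (#|D| < N ^ 2)%N ->
  is_attractor D F -> connected F ->
  forall x : R * R, cut_point F x ->
  exists n0 : nat, (1 <= n0)%N /\
    exists om ta : seq (digit N), om <> ta /\
      well_separated D F n0 x om ta.
Proof.
move=> N2 _ _ attrF cF x [_ /connectedPn[E [E0 FxE sepE]]].
have [a Ea] := E0 false; have [b Eb] := E0 true.
have [[Fa ax] [Fb bx]] : (F `\ x) a /\ (F `\ x) b.
  by rewrite FxE; split; [left|right].
have [na avoid_a] := cells_eventually_avoid attrF N2 ax.
have [nb avoid_b] := cells_eventually_avoid attrF N2 bx.
pose n := maxn 1 (maxn na nb).
have [om [om_word om_a]] := exists_cell attrF n Fa.
have [ta [ta_word ta_b]] := exists_cell attrF n Fb.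
have om_x : ~ (phiw om @` F) x.
  by apply: (avoid_a n om _ (proj1 om_word) om_a); rewrite !leq_max leqnn orbT.
have ta_x : ~ (phiw ta @` F) x.
  by apply: (avoid_b n ta _ (proj1 ta_word) ta_b); rewrite !leq_max leqnn !orbT.
have om_A := cell_subset_side attrF cF sepE FxE om_word om_x om_a Ea.
have sepBA : separated (E true) (E false) by rewrite separatedC.
have FxBA : F `\ x = E true `|` E false by rewrite setUC.
have ta_B := cell_subset_side attrF cF sepBA FxBA ta_word ta_x ta_b Eb.
exists n; split; first by rewrite leq_maxl.
exists om, ta; split.
  move=> om_ta; suff : (E false `&` E true) a.
    by rewrite (separated_disjoint sepE).
  by split; [|apply: ta_B; rewrite -om_ta].
split=> //; [by case=> _ /om_x | by case=> _ /ta_x | move=> p _].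
split; first exact: (cell_subset_Eset attrF p om_word om_x).
split; first exact: (cell_subset_Eset attrF p ta_word ta_x).
move=> a' b' /om_A Ea' /ta_B Eb'.
apply: separated_not_connected_component sepE _ Ea' Eb'.
by rewrite -FxE; exact: (Eset_subset_setD1 attrF).
Qed.
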